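(* Let $M(C,\bar\xi,\pi)$ be a Myller configuration with Darboux frame $(\bar\xi,\bar\mu,\bar v)$ and invariants $G,K,T$, $(T,K)\neq(0,0)$ everywhere, and suppose $C$ is a $\bar v$-helix with fixed unit axis $\bar d_v$ and constant angle $\omega$, $\langle\bar v,\bar d_v\rangle=\cos\omega$. Then, for one choice of sign, $$\bar d_v=\mp\sin\omega\frac{T}{\sqrt{T^2+K^2}}\bar\xi\pm\sin\omega\frac{K}{\sqrt{T^2+K^2}}\bar\mu+(\cos\omega)\bar v.$$
   Context: Let $C$ be a smooth curve in $E^3$ parametrized by arclength $s$; primes denote $d/ds$. A Myller configuration $M(C,\bar\xi,\pi)$ consists of a smooth unit vector field $\bar\xi$ along $C$ and a smooth oriented plane field $\pi$ with $\bar\xi\in\pi$; $\bar v$ is the unit normal of $\pi$, $\bar\mu=\bar v\times\bar\xi$, and $\bar\xi'=G\bar\mu+K\bar v$, $\bar\mu'=-G\bar\xi+T\bar v$, $\bar v'=-K\bar\xi-T\bar\mu$. $C$ is a $\bar v$-helix if there are a constant unit vector $\bar d_v$ (axis) and a constant $\omega$ with $\langle\bar v,\bar d_v\rangle=\cos\omega$ along $C$. *)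

From Stdlib Require Import Reals.
From Coquelicot Require Import Coquelicot.
Open Scope R_scope.

Record vec3 := V3 { vx : R; vy : R; vz : R }.

Definition vadd (u w : vec3) : vec3 := V3 (vx u + vx w) (vy u + vy w) (vz u + vz w).
Definition vscale (c : R) (u : vec3) : vec3 := V3 (c * vx u) (c * vy u) (c * vz u).
Definition dot (u w : vec3) : R := vx u * vx w + vy u * vy w + vz u * vz w.
Definition cross (u w : vec3) : vec3 :=
  V3 (vy u * vz w - vz u * vy w) (vz u * vx w - vx u * vz w) (vx u * vy w - vy u * vx w).
Definition is_unit (u : vec3) : Prop := dot u u = 1.

Definition vderive (f : R -> vec3) (s : R) (f' : vec3) : Prop :=
  is_derive (fun t => vx (f t)) s (vx f') /\
  is_derive (fun t => vy (f t)) s (vy f') /\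
  is_derive (fun t => vz (f t)) s (vz f').

(* Darboux frame (xi, mu, v) of a Myller configuration M(C, xi, pi) along a
   curve parametrized by arclength s in the open interval (a,b), with
   invariants G, K, T (taken continuous, as they are smooth in the paper). *)
Definition Myller_frame (a b : R) (xi mu v : R -> vec3) (G K T : R -> R) : Prop :=
  forall s, a < s < b ->
    is_unit (xi s) /\ is_unit (v s) /\ dot (v s) (xi s) = 0 /\
    mu s = cross (v s) (xi s) /\
    vderive xi s (vadd (vscale (G s) (mu s)) (vscale (K s) (v s))) /\
    vderive mu s (vadd (vscale (- G s) (xi s)) (vscale (T s) (v s))) /\
    vderive v s (vadd (vscale (- K s) (xi s)) (vscale (- T s) (mu s))) /\
    continuous G s /\ continuous K s /\ continuous T s.

Definition is_v_helix (a b : R) (v : R -> vec3) (d : vec3) (omega : R) : Prop :=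
  is_unit d /\ forall s, a < s < b -> dot (v s) d = cos omega.

(* Since <v, d> = cos omega is constant and v' = -K xi - T mu, differentiating
   gives K <xi, d> + T <mu, d> = 0, while expanding the unit vector d in the
   orthonormal frame (xi, mu, v) gives <xi, d>^2 + <mu, d>^2 = sin^2 omega.
   Hence (<xi, d>, <mu, d>) = lambda (-T, K) / sqrt (T^2 + K^2) for a continuous
   lambda with lambda^2 = sin^2 omega; by the intermediate value theorem lambda
   cannot change sign on the interval, so lambda = eps sin omega for a fixed
   sign eps. *)

From Stdlib Require Import Reals Lra Psatz.
From Coquelicot Require Import Coquelicot.
Open Scope R_scope.

Lemma dot_vadd_l (u w z : vec3) : dot (vadd u w) z = dot u z + dot w z.
Proof. unfold dot, vadd; simpl; ring. Qed.

Lemma dot_vscale_l (c : R) (u z : vec3) : dot (vscale c u) z = c * dot u z.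
Proof. unfold dot, vscale; simpl; ring. Qed.

Lemma vscale_1 (u : vec3) : vscale 1 u = u.
Proof. destruct u; unfold vscale; simpl; f_equal; ring. Qed.

(* Cramer's rule in the basis (x, w × x, w): its determinant is the Gram
   determinant of x and w, because (w × x) × w = (w·w) x - (w·x) w and
   x × (w × x) = (x·x) w - (x·w) x. *)
Lemma cramer_cross_basis (x w d : vec3) :
  vscale (dot x x * dot w w - dot w x ^ 2) d =
  vadd (vscale (dot x d * dot w w - dot w d * dot w x) x)
    (vadd (vscale (dot (cross w x) d) (cross w x))
          (vscale (dot w d * dot x x - dot x d * dot w x) w)).
Proof. destruct x, w, d; unfold vscale, vadd, dot, cross; simpl; f_equal; ring. Qed.

Lemma orthonormal_decomposition (x w d : vec3) :
  is_unit x -> is_unit w -> dot w x = 0 ->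
  d = vadd (vscale (dot x d) x)
        (vadd (vscale (dot (cross w x) d) (cross w x)) (vscale (dot w d) w)).
Proof.
  unfold is_unit; intros Hx Hw Hwx.
  pose proof (cramer_cross_basis x w d) as E.
  rewrite Hx, Hw, Hwx in E.
  replace (1 * 1 - 0 ^ 2) with 1 in E by ring.
  rewrite !Rmult_1_r, !Rmult_0_r, !Rminus_0_r, vscale_1 in E.
  exact E.
Qed.

Lemma is_derive_dot_l (f : R -> vec3) (f' d : vec3) (s : R) :
  vderive f s f' -> is_derive (fun t => dot (f t) d) s (dot f' d).
Proof.
  intros (Dx & Dy & Dz); unfold dot.
  apply (is_derive_plus (fun t => vx (f t) * vx d + vy (f t) * vy d)
                        (fun t => vz (f t) * vz d));
    [apply (is_derive_plus (fun t => vx (f t) * vx d) (fun t => vy (f t) * vy d))|];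
    [exact (is_derive_scal_l _ _ _ (vx d) Dx) | exact (is_derive_scal_l _ _ _ (vy d) Dy)
    | exact (is_derive_scal_l _ _ _ (vz d) Dz)].
Qed.

Lemma vderive_continuous_dot (f : R -> vec3) (f' d : vec3) (s : R) :
  vderive f s f' -> continuous (fun t => dot (f t) d) s.
Proof.
  intro Df. apply (ex_derive_continuous (V := R_NormedModule)).
  exists (dot f' d). exact (is_derive_dot_l f f' d s Df).
Qed.

Lemma is_derive_const_on_interval (f : R -> R) (a b c s l : R) :
  a < s < b -> (forall t, a < t < b -> f t = c) -> is_derive f s l -> l = 0.
Proof.
  intros Hs Hf Df.
  assert (Hloc : locally s (fun t => f t = c)).
  { apply (locally_open (fun t => a < t /\ t < b)); [|exact Hf|exact Hs].
    apply open_and; [apply open_gt|apply open_lt]. }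
  apply (is_derive_ext_loc _ _ _ _ Hloc) in Df.
  rewrite <- (is_derive_unique _ _ _ Df).
  exact (is_derive_unique _ _ _ (is_derive_const c s)).
Qed.

Lemma pow2_eq_pow2 (x y : R) : x ^ 2 = y ^ 2 -> x = y \/ x = - y.
Proof. rewrite <- !Rsqr_pow2; apply Rsqr_eq. Qed.

Lemma continuous_const_sq_eq (f : R -> R) (c x y : R) :
  x <= y -> (forall t, x <= t <= y -> continuity_pt f t) ->
  (forall t, x <= t <= y -> f t ^ 2 = c ^ 2) -> f x = f y.
Proof.
  intros Hxy Hf Hsq.
  destruct (Req_dec (f x) (f y)) as [E|Hne]; [exact E|exfalso].
  assert (Hopp : f y = - f x).
  { destruct (pow2_eq_pow2 (f y) (f x)) as [E|E]; [|congruence|exact E].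
    rewrite (Hsq y), (Hsq x); lra. }
  assert (Hx0 : f x <> 0) by (intro E; apply Hne; rewrite Hopp, E; ring).
  (* g := -f(x) f changes sign on [x, y], so f vanishes there, hence c = 0. *)
  destruct (Ranalysis5.IVT_interv (mult_real_fct (- f x) f) x y)
    as [z [Hz Hgz]].
  - intros t Ht; apply continuity_pt_scal, Hf, Ht.
  - destruct (Req_dec x y) as [<-|]; [congruence|lra].
  - unfold mult_real_fct. pose proof (pow2_gt_0 _ Hx0). nra.
  - unfold mult_real_fct. rewrite Hopp. pose proof (pow2_gt_0 _ Hx0). nra.
  - unfold mult_real_fct in Hgz.
    assert (Hfz : f z = 0) by (apply Rmult_integral in Hgz; destruct Hgz; lra).
    pose proof (Hsq z Hz) as Ez. pose proof (Hsq x ltac:(lra)) as Ex.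
    rewrite Hfz in Ez. apply Hx0; nra.
Qed.

Lemma perp_coordinates (A B K T : R) :
  0 < T ^ 2 + K ^ 2 -> K * A + T * B = 0 ->
  let l := (K * B - T * A) / sqrt (T ^ 2 + K ^ 2) in
  A = - l * T / sqrt (T ^ 2 + K ^ 2) /\ B = l * K / sqrt (T ^ 2 + K ^ 2) /\
  l ^ 2 = A ^ 2 + B ^ 2.
Proof.
  intros Hpos Hperp l; unfold l.
  set (n := sqrt (T ^ 2 + K ^ 2)).
  assert (Hn : n * n = T ^ 2 + K ^ 2) by (apply sqrt_sqrt; lra).
  assert (Hn0 : n <> 0) by (intro E; rewrite E in Hn; lra).
  repeat split; field_simplify_eq; auto;
    replace (n ^ 2) with (T ^ 2 + K ^ 2) by (rewrite <- Hn; ring).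
  - transitivity (A * T ^ 2 - K * B * T + K * (K * A + T * B)); [ring|].
    rewrite Hperp; ring.
  - transitivity (B * K ^ 2 - K * T * A + T * (K * A + T * B)); [ring|].
    rewrite Hperp; ring.
  - (* Lagrange's identity *)
    transitivity ((B ^ 2 + A ^ 2) * (T ^ 2 + K ^ 2) - (K * A + T * B) ^ 2); [ring|].
    rewrite Hperp; ring.
Qed.

Lemma continuous_pow2_comp (f : R -> R) (s : R) :
  continuous f s -> continuous (fun t => f t ^ 2) s.
Proof.
  intro Hf.
  apply (continuous_mult f (fun t => f t ^ 1)); [exact Hf|].
  apply (continuous_mult f (fun _ => 1)); [exact Hf|apply continuous_const].
Qed.

Section VHelix.

Context {a b : R} {xi mu v : R -> vec3} {G K T : R -> R} {d : vec3} {omega : R}.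
Hypothesis Hframe : Myller_frame a b xi mu v G K T.
Hypothesis Hhelix : is_v_helix a b v d omega.

Lemma v_helix_decomposition (s : R) : a < s < b ->
  d = vadd (vscale (dot (xi s) d) (xi s))
        (vadd (vscale (dot (mu s) d) (mu s)) (vscale (cos omega) (v s))).
Proof.
  intro Hs.
  destruct (Hframe s Hs) as (Hxi & Hv & Hvxi & Hmu & _).
  destruct Hhelix as [_ Hangle].
  rewrite Hmu, <- (Hangle s Hs).
  exact (orthonormal_decomposition _ _ d Hxi Hv Hvxi).
Qed.

Lemma v_helix_sq_coordinates (s : R) : a < s < b ->
  dot (xi s) d ^ 2 + dot (mu s) d ^ 2 = sin omega ^ 2.
Proof.
  intro Hs.
  destruct Hhelix as [Hd Hangle].
  assert (Hdd : dot d d = dot (xi s) d ^ 2 + dot (mu s) d ^ 2 + cos omega ^ 2).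
  { rewrite (v_helix_decomposition s Hs) at 1.
    rewrite !dot_vadd_l, !dot_vscale_l, <- (Hangle s Hs); ring. }
  unfold is_unit in Hd. pose proof (sin2_cos2 omega) as Hpyth.
  rewrite <- !Rsqr_pow2 in *. lra.
Qed.

Lemma v_helix_coordinates_perp (s : R) : a < s < b ->
  K s * dot (xi s) d + T s * dot (mu s) d = 0.
Proof.
  intro Hs.
  destruct (Hframe s Hs) as (_ & _ & _ & _ & _ & _ & Dv & _).
  destruct Hhelix as [_ Hangle].
  pose proof (is_derive_const_on_interval _ a b _ s _ Hs Hangle
                (is_derive_dot_l v _ d s Dv)) as Hder.
  rewrite !dot_vadd_l, !dot_vscale_l in Hder. lra.
Qed.

Hypothesis HTK : forall s, a < s < b -> T s <> 0 \/ K s <> 0.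

Definition v_helix_amplitude (t : R) : R :=
  (K t * dot (mu t) d - T t * dot (xi t) d) / sqrt (T t ^ 2 + K t ^ 2).

Lemma TK_sq_sum_pos (s : R) : a < s < b -> 0 < T s ^ 2 + K s ^ 2.
Proof.
  intro Hs.
  destruct (HTK s Hs) as [H|H]; pose proof (pow2_gt_0 _ H);
    pose proof (pow2_ge_0 (T s)); pose proof (pow2_ge_0 (K s)); lra.
Qed.

Lemma v_helix_coordinates (s : R) : a < s < b ->
  dot (xi s) d = - v_helix_amplitude s * T s / sqrt (T s ^ 2 + K s ^ 2) /\
  dot (mu s) d = v_helix_amplitude s * K s / sqrt (T s ^ 2 + K s ^ 2) /\
  v_helix_amplitude s ^ 2 = sin omega ^ 2.
Proof.
  intro Hs.
  pose proof (perp_coordinates (dot (xi s) d) (dot (mu s) d) (K s) (T s)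
                (TK_sq_sum_pos s Hs) (v_helix_coordinates_perp s Hs)) as Hcoord.
  rewrite (v_helix_sq_coordinates s Hs) in Hcoord.
  exact Hcoord.
Qed.

Lemma v_helix_amplitude_continuous (s : R) : a < s < b ->
  continuity_pt v_helix_amplitude s.
Proof.
  intro Hs.
  destruct (Hframe s Hs) as (_ & _ & _ & _ & Dxi & Dmu & _ & _ & cK & cT).
  apply continuity_pt_filterlim; unfold v_helix_amplitude, Rdiv.
  apply (continuous_mult (fun t => K t * dot (mu t) d - T t * dot (xi t) d)
                         (fun t => / sqrt (T t ^ 2 + K t ^ 2))).
  - apply (continuous_minus (fun t => K t * dot (mu t) d) (fun t => T t * dot (xi t) d)).
    + apply (continuous_mult K (fun t => dot (mu t) d));
        [exact cK|exact (vderive_continuous_dot _ _ d s Dmu)].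
    + apply (continuous_mult T (fun t => dot (xi t) d));
        [exact cT|exact (vderive_continuous_dot _ _ d s Dxi)].
  - apply (continuous_Rinv_comp (fun t => sqrt (T t ^ 2 + K t ^ 2))).
    + apply continuous_sqrt_comp.
      apply (continuous_plus (fun t => T t ^ 2) (fun t => K t ^ 2));
        apply continuous_pow2_comp; assumption.
    + apply Rgt_not_eq, sqrt_lt_R0, (TK_sq_sum_pos s Hs).
Qed.

Lemma v_helix_amplitude_const (s s' : R) : a < s < b -> a < s' < b ->
  v_helix_amplitude s = v_helix_amplitude s'.
Proof.
  assert (Hle : forall x y, a < x -> x <= y -> y < b ->
            v_helix_amplitude x = v_helix_amplitude y).
  { intros x y Hx Hxy Hy.
    apply (continuous_const_sq_eq _ (sin omega)); [exact Hxy| |];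
      intros t Ht; [apply v_helix_amplitude_continuous|apply v_helix_coordinates]; lra. }
  intros Hs Hs'.
  destruct (Rle_dec s s'); [apply Hle|symmetry; apply Hle]; lra.
Qed.

Lemma v_helix_amplitude_sign (s : R) : a < s < b ->
  exists eps, (eps = 1 \/ eps = -1) /\ v_helix_amplitude s = eps * sin omega.
Proof.
  intro Hs.
  destruct (v_helix_coordinates s Hs) as (_ & _ & Hsq).
  destruct (pow2_eq_pow2 _ _ Hsq) as [E|E];
    [exists 1|exists (-1)]; split; auto; rewrite E; ring.
Qed.

Lemma v_helix_axis (s eps : R) : a < s < b ->
  v_helix_amplitude s = eps * sin omega ->
  d = vadd (vscale (- eps * sin omega * T s / sqrt (T s ^ 2 + K s ^ 2)) (xi s))
        (vadd (vscale (eps * sin omega * K s / sqrt (T s ^ 2 + K s ^ 2)) (mu s))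
              (vscale (cos omega) (v s))).
Proof.
  intros Hs Hamp.
  destruct (v_helix_coordinates s Hs) as (Hxi & Hmu & _).
  rewrite (v_helix_decomposition s Hs) at 1.
  rewrite Hxi, Hmu, Hamp.
  repeat f_equal; ring.
Qed.

End VHelix.

Theorem corollary25 (a b : R) (xi mu v : R -> vec3) (G K T : R -> R)
  (d : vec3) (omega : R) :
  a < b ->
  Myller_frame a b xi mu v G K T ->
  (forall s, a < s < b -> T s <> 0 \/ K s <> 0) ->
  is_v_helix a b v d omega ->
  exists eps : R, (eps = 1 \/ eps = -1) /\
    forall s, a < s < b ->
      d = vadd (vscale (- eps * sin omega * T s / sqrt (T s ^ 2 + K s ^ 2)) (xi s))
          (vadd (vscale (eps * sin omega * K s / sqrt (T s ^ 2 + K s ^ 2)) (mu s))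
                (vscale (cos omega) (v s))).
Proof.
  intros Hab Hframe HTK Hhelix.
  set (s0 := (a + b) / 2).
  assert (Hs0 : a < s0 < b) by (unfold s0; lra).
  destruct (v_helix_amplitude_sign Hframe Hhelix HTK s0 Hs0) as (eps & Hpm & Hamp0).
  exists eps; split; [exact Hpm|]. intros s Hs.
  apply (v_helix_axis Hframe Hhelix HTK s eps Hs).
  rewrite (v_helix_amplitude_const Hframe Hhelix HTK s s0 Hs Hs0).
  exact Hamp0.
Qed.
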